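(* Let $M\equiv\lambda\,\mathit{argClass}.\,\mathbf{Y}(\lambda\,\mathit{myClass}\,\lambda\,\mathit{state}.\,(\mathit{argClass}\;\mathit{state})\oplus R)$ be a mixin. For any type $\sigma\in\mathbb{T}$ and any $\rho=\langle l:\tau\rangle$ with $l\notin\mathit{lbl}(R)$, we have $\vdash M:(\sigma\to\rho)\to(\sigma\to\rho)$.
   Context: \textbf{Terms.} $\Lambda_R\ni M,N ::= x\mid\lambda x.M\mid MN\mid M.l\mid R\mid M\oplus R$, records $R ::= \langle l_i=M_i\mid i\in I\rangle$ ($I$ finite, labels pairwise distinct), $\mathit{lbl}(\langle l_i=M_i\mid i\in I\rangle)=\{l_i\mid i\in I\}$. $\mathbf{Y}=\lambda f.(\lambda x.f(xx))(\lambda x.f(xx))$. A mixin is a closed term of the displayed form ($R$ may mention $\mathit{argClass},\mathit{myClass},\mathit{state}$). \textbf{Types.} $\mathbb{T}\ni\sigma ::= a\mid\omega\mid\sigma_1\to\sigma_2\mid\sigma_1\cap\sigma_2\mid\rho$, $\mathbb{T}_R\ni\rho ::= \langle\rangle\mid\langle l:\sigma\rangle\mid\rho_1+\rho_2\mid\rho_1\cap\rho_2$. Subtyping $\le$: least preorder with $\sigma\le\omega$; $\omega\le\omega\to\omega$; $\sigma\cap\tau\le\sigma,\tau$; $\sigma\le\tau_1,\sigma\le\tau_2\Rightarrow\sigma\le\tau_1\cap\tau_2$; $(\sigma\to\tau_1)\cap(\sigma\to\tau_2)\le\sigma\to\tau_1\cap\tau_2$; $\sigma_2\le\sigma_1,\tau_1\le\tau_2\Rightarrow\sigma_1\to\tau_1\le\sigma_2\to\tau_2$;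 $\langle l:\sigma\rangle\le\langle\rangle$; $\langle l:\sigma\rangle\cap\langle l:\tau\rangle\le\langle l:\sigma\cap\tau\rangle$; $\sigma\le\tau\Rightarrow\langle l:\sigma\rangle\le\langle l:\tau\rangle$; $\rho+\langle\rangle=\langle\rangle+\rho=\rho$; $(\rho_1+\rho_2)+\rho_3=\rho_1+(\rho_2+\rho_3)$; $(\rho_1\cap\rho_2)+\rho_3=(\rho_1+\rho_3)\cap(\rho_2+\rho_3)$; $\langle l:\sigma\rangle+(\langle l:\tau\rangle\cap\rho)=\langle l:\tau\rangle\cap\rho$; $\langle l:\sigma\rangle+(\langle l':\tau\rangle\cap\rho)=\langle l':\tau\rangle\cap(\langle l:\sigma\rangle+\rho)$ if $l\neq l'$; $\rho_1\le\rho_2\Rightarrow\rho_1+\rho\le\rho_2+\rho$; $\rho_1=\rho_2\Rightarrow\rho+\rho_1=\rho+\rho_2$ ($=$ is $\le$ both ways). $\mathit{lbl}(\langle\rangle)=\emptyset$, $\mathit{lbl}(\langle l:\sigma\rangle)=\{l\}$, $\mathit{lbl}(\rho_1\cap\rho_2)=\mathit{lbl}(\rho_1+\rho_2)=\mathit{lbl}(\rho_1)\cup\mathit{lbl}(\rho_2)$. \textbf{Type assignment} $\Gamma\vdash M:\sigma$ ($\vdash$ alone means empty basis): $\Gamma\vdash x:\sigma$ if $x:\sigma\in\Gamma$; $\to$-introduction and elimination; $\cap$-introduction; $\Gamma\vdash M:\omega$; subsumption along $\le$; $\Gamma\vdash\langle l_i=M_i\mid i\in I\rangle:\langle\rangle$;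 from $\Gamma\vdash M_k:\sigma$, $k\in I$ infer $\Gamma\vdash\langle l_i=M_i\mid i\in I\rangle:\langle l_k:\sigma\rangle$; from $\Gamma\vdash M:\langle l:\sigma\rangle$ infer $\Gamma\vdash M.l:\sigma$; from $\Gamma\vdash M:\rho_1$, $\Gamma\vdash R:\rho_2$, $\mathit{lbl}(R)=\mathit{lbl}(\rho_2)$ infer $\Gamma\vdash M\oplus R:\rho_1+\rho_2$. *)

From Stdlib Require Import List Arith.
Import ListNotations.

Definition var := nat.
Definition label := nat.

Inductive term : Type :=
| Var : var -> term
| Lam : var -> term -> term
| App : term -> term -> term
| Sel : term -> label -> term
| Rec : list (label * term) -> term
| Ext : term -> list (label * term) -> term.       (* M (+) R, R a record *)

Definition lbl_rec (fs : list (label * term)) : list label := map fst fs.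

Inductive wf_term : term -> Prop :=
| wft_var x : wf_term (Var x)
| wft_lam x M : wf_term M -> wf_term (Lam x M)
| wft_app M N : wf_term M -> wf_term N -> wf_term (App M N)
| wft_sel M l : wf_term M -> wf_term (Sel M l)
| wft_rec fs : NoDup (lbl_rec fs) -> Forall (fun p => wf_term (snd p)) fs ->
    wf_term (Rec fs)
| wft_ext M fs : wf_term M -> NoDup (lbl_rec fs) ->
    Forall (fun p => wf_term (snd p)) fs -> wf_term (Ext M fs).

Inductive occurs_free (x : var) : term -> Prop :=
| of_var : occurs_free x (Var x)
| of_lam y M : x <> y -> occurs_free x M -> occurs_free x (Lam y M)
| of_app_l M N : occurs_free x M -> occurs_free x (App M N)
| of_app_r M N : occurs_free x N -> occurs_free x (App M N)
| of_sel M l : occurs_free x M -> occurs_free x (Sel M l)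
| of_rec fs l M : In (l, M) fs -> occurs_free x M -> occurs_free x (Rec fs)
| of_ext_l M fs : occurs_free x M -> occurs_free x (Ext M fs)
| of_ext_r M fs l N : In (l, N) fs -> occurs_free x N -> occurs_free x (Ext M fs).

Definition v_f : var := 0.
Definition v_x : var := 1.
Definition argClass : var := 2.
Definition myClass : var := 3.
Definition state : var := 4.

Definition Ycomb : term :=
  Lam v_f (App (Lam v_x (App (Var v_f) (App (Var v_x) (Var v_x))))
               (Lam v_x (App (Var v_f) (App (Var v_x) (Var v_x))))).

Definition mixin (R : list (label * term)) : term :=
  Lam argClass
    (App Ycomb
       (Lam myClass (Lam state (Ext (App (Var argClass) (Var state)) R)))).

(* One syntax for T; T_R is carved out by the predicate [is_rty]. *)
Inductive ty : Type :=
| TAtom : nat -> ty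
| TOmega : ty
| TArrow : ty -> ty -> ty
| TInter : ty -> ty -> ty
| TREmpty : ty
| TRField : label -> ty -> ty
| TRPlus : ty -> ty -> ty.

(* wf_ty s  <-> s in T ;  is_rty r <-> r in T_R *)
Inductive wf_ty : ty -> Prop :=
| wf_atom a : wf_ty (TAtom a)
| wf_omega : wf_ty TOmega
| wf_arrow s t : wf_ty s -> wf_ty t -> wf_ty (TArrow s t)
| wf_inter s t : wf_ty s -> wf_ty t -> wf_ty (TInter s t)
| wf_rty r : is_rty r -> wf_ty r
with is_rty : ty -> Prop :=
| rty_empty : is_rty TREmpty
| rty_field l s : wf_ty s -> is_rty (TRField l s)
| rty_plus r1 r2 : is_rty r1 -> is_rty r2 -> is_rty (TRPlus r1 r2)
| rty_inter r1 r2 : is_rty r1 -> is_rty r2 -> is_rty (TInter r1 r2).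

(* lbl of a record type (only meaningful on T_R) *)
Fixpoint lbl_ty (r : ty) : list label :=
  match r with
  | TREmpty => []
  | TRField l _ => [l]
  | TInter r1 r2 => lbl_ty r1 ++ lbl_ty r2
  | TRPlus r1 r2 => lbl_ty r1 ++ lbl_ty r2
  | _ => []
  end.

(** Equations "a = b" are rendered as the two inequalities. The middle type
    of transitivity is required to be in T, so that the relation restricted
    to T is exactly the one of the paper. *)
Inductive sub : ty -> ty -> Prop :=
| sub_refl s : sub s s
| sub_trans s t u : wf_ty t -> sub s t -> sub t u -> sub s u
| sub_omega s : sub s TOmega
| sub_omega_arrow : sub TOmega (TArrow TOmega TOmega)
| sub_inter_l s t : sub (TInter s t) s
| sub_inter_r s t : sub (TInter s t) t
| sub_inter_glb s t1 t2 : sub s t1 -> sub s t2 -> sub s (TInter t1 t2)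
| sub_arrow_inter s t1 t2 :
    sub (TInter (TArrow s t1) (TArrow s t2)) (TArrow s (TInter t1 t2))
| sub_arrow s1 s2 t1 t2 : sub s2 s1 -> sub t1 t2 ->
    sub (TArrow s1 t1) (TArrow s2 t2)
| sub_field_empty l s : wf_ty s -> sub (TRField l s) TREmpty
| sub_field_inter l s t : wf_ty s -> wf_ty t ->
    sub (TInter (TRField l s) (TRField l t)) (TRField l (TInter s t))
| sub_field l s t : sub s t -> sub (TRField l s) (TRField l t)
| sub_plus_empty_r1 r : is_rty r -> sub (TRPlus r TREmpty) r
| sub_plus_empty_r2 r : is_rty r -> sub r (TRPlus r TREmpty)
| sub_plus_empty_l1 r : is_rty r -> sub (TRPlus TREmpty r) r
| sub_plus_empty_l2 r : is_rty r -> sub r (TRPlus TREmpty r)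
| sub_plus_assoc1 r1 r2 r3 : is_rty r1 -> is_rty r2 -> is_rty r3 ->
    sub (TRPlus (TRPlus r1 r2) r3) (TRPlus r1 (TRPlus r2 r3))
| sub_plus_assoc2 r1 r2 r3 : is_rty r1 -> is_rty r2 -> is_rty r3 ->
    sub (TRPlus r1 (TRPlus r2 r3)) (TRPlus (TRPlus r1 r2) r3)
| sub_plus_distr1 r1 r2 r3 : is_rty r1 -> is_rty r2 -> is_rty r3 ->
    sub (TRPlus (TInter r1 r2) r3) (TInter (TRPlus r1 r3) (TRPlus r2 r3))
| sub_plus_distr2 r1 r2 r3 : is_rty r1 -> is_rty r2 -> is_rty r3 ->
    sub (TInter (TRPlus r1 r3) (TRPlus r2 r3)) (TRPlus (TInter r1 r2) r3)
| sub_override_same1 l s t r : wf_ty s -> wf_ty t -> is_rty r ->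
    sub (TRPlus (TRField l s) (TInter (TRField l t) r)) (TInter (TRField l t) r)
| sub_override_same2 l s t r : wf_ty s -> wf_ty t -> is_rty r ->
    sub (TInter (TRField l t) r) (TRPlus (TRField l s) (TInter (TRField l t) r))
| sub_override_diff1 l l' s t r : l <> l' -> wf_ty s -> wf_ty t -> is_rty r ->
    sub (TRPlus (TRField l s) (TInter (TRField l' t) r))
        (TInter (TRField l' t) (TRPlus (TRField l s) r))
| sub_override_diff2 l l' s t r : l <> l' -> wf_ty s -> wf_ty t -> is_rty r ->
    sub (TInter (TRField l' t) (TRPlus (TRField l s) r))
        (TRPlus (TRField l s) (TInter (TRField l' t) r))
| sub_plus_mono r1 r2 r : is_rty r1 -> is_rty r2 -> is_rty r ->
    sub r1 r2 -> sub (TRPlus r1 r) (TRPlus r2 r)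
| sub_plus_cong r r1 r2 : is_rty r -> is_rty r1 -> is_rty r2 ->
    sub r1 r2 -> sub r2 r1 -> sub (TRPlus r r1) (TRPlus r r2).

Definition basis := var -> option ty.
Definition empty_basis : basis := fun _ => None.
Definition extend (G : basis) (x : var) (s : ty) : basis :=
  fun y => if Nat.eqb y x then Some s else G y.

Inductive typ : basis -> term -> ty -> Prop :=
| typ_var G x s : G x = Some s -> typ G (Var x) s
| typ_lam G x M s t : wf_ty s -> typ (extend G x s) M t ->
    typ G (Lam x M) (TArrow s t)
| typ_app G M N s t : wf_ty s -> typ G M (TArrow s t) -> typ G N s ->
    typ G (App M N) t
| typ_inter G M s t : typ G M s -> typ G M t -> typ G M (TInter s t)
| typ_omega G M : typ G M TOmega
| typ_sub G M s t : wf_ty t -> typ G M s -> sub s t -> typ G M t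
| typ_rec_empty G fs : typ G (Rec fs) TREmpty
| typ_rec_field G fs l M s : In (l, M) fs -> typ G M s ->
    typ G (Rec fs) (TRField l s)
| typ_sel G M l s : typ G M (TRField l s) -> typ G (Sel M l) s
| typ_ext G M fs r1 r2 : is_rty r1 -> is_rty r2 ->
    typ G M r1 -> typ G (Rec fs) r2 ->
    (forall l, In l (lbl_rec fs) <-> In l (lbl_ty r2)) ->
    typ G (Ext M fs) (TRPlus r1 r2).

(* The fixed-point combinator only ever needs its self-application [x x] to
   have type [omega], so [Y : (omega -> t) -> t] for every [t]; hence it
   suffices to give the class generator the type [omega -> sigma -> rho],
   ignoring [myClass]. Under [argClass : sigma -> <l : tau>], the body
   [(argClass state) (+) R] gets [<l : tau> + /\_i <l_i : omega>], where the
   [l_i] are the labels of [R]; as [l] is none of them, the override rules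
   move [<l : tau>] through every field, leaving a type below [<l : tau>]. *)
From Stdlib Require Import List Arith.
Import ListNotations.

Lemma wf_ty_field l s : wf_ty s -> wf_ty (TRField l s).
Proof. intro Hs. now apply wf_rty, rty_field. Qed.

Fixpoint omega_fields (ls : list label) : ty :=
  match ls with
  | [] => TREmpty
  | l :: ls' => TInter (TRField l TOmega) (omega_fields ls')
  end.

Lemma is_rty_omega_fields ls : is_rty (omega_fields ls).
Proof.
  induction ls as [|l ls IH]; simpl; repeat constructor; assumption.
Qed.

Lemma lbl_ty_omega_fields ls : lbl_ty (omega_fields ls) = ls.
Proof.
  induction ls as [|l ls IH]; simpl; [reflexivity | now rewrite IH].
Qed.

Lemma typ_rec_omega_fields G fs ls :
  incl ls (lbl_rec fs) -> typ G (Rec fs) (omega_fields ls).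
Proof.
  induction ls as [|l ls IH]; intro Hincl; simpl.
  - apply typ_rec_empty.
  - apply incl_cons_inv in Hincl as [Hl Hls].
    apply in_map_iff in Hl as [[l' M] [Hl' HlM]]; simpl in Hl'; subst l'.
    apply typ_inter; [|now apply IH].
    apply typ_rec_field with M; [assumption | apply typ_omega].
Qed.

Lemma sub_override_omega_fields l tau ls :
  wf_ty tau -> ~ In l ls ->
  sub (TRPlus (TRField l tau) (omega_fields ls)) (TRField l tau).
Proof.
  intros Htau. induction ls as [|l1 ls IH]; intro Hnotin; simpl.
  - apply sub_plus_empty_r1. now constructor.
  - apply not_in_cons in Hnotin as [Hne Hnotin].
    assert (Hrest := is_rty_omega_fields ls).
    assert (Hplus : is_rty (TRPlus (TRField l tau) (omega_fields ls)))
      by (apply rty_plus; [now constructor | assumption]).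
    apply sub_trans with
      (TInter (TRField l1 TOmega) (TRPlus (TRField l tau) (omega_fields ls))).
    + apply wf_rty, rty_inter; [apply rty_field, wf_omega | exact Hplus].
    + apply sub_override_diff1; auto; constructor.
    + apply sub_trans with (TRPlus (TRField l tau) (omega_fields ls)).
      * now constructor.
      * apply sub_inter_r.
      * now apply IH.
Qed.

Lemma typ_ext_fresh_field G M fs l tau :
  wf_ty tau -> ~ In l (lbl_rec fs) ->
  typ G M (TRField l tau) -> typ G (Ext M fs) (TRField l tau).
Proof.
  intros Htau Hnotin HM.
  apply typ_sub with (TRPlus (TRField l tau) (omega_fields (lbl_rec fs))).
  - now apply wf_ty_field.
  - apply typ_ext.
    + now constructor.
    + apply is_rty_omega_fields.
    + exact HM.
    + apply typ_rec_omega_fields, incl_refl.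
    + intro l'. now rewrite lbl_ty_omega_fields.
  - now apply sub_override_omega_fields.
Qed.

Lemma typ_Ycomb G t : wf_ty t -> typ G Ycomb (TArrow (TArrow TOmega t) t).
Proof.
  intro Ht. unfold Ycomb.
  apply typ_lam; [apply wf_arrow; [apply wf_omega | exact Ht]|].
  apply typ_app with TOmega; [constructor| |apply typ_omega].
  apply typ_lam; [constructor|].
  apply typ_app with TOmega; [constructor| |apply typ_omega].
  now apply typ_var.
Qed.

Theorem lemma3p19 :
  forall (R : list (label * term)) (sigma tau : ty) (l : label),
    wf_term (Rec R) ->
    (forall x, occurs_free x (Rec R) ->
       x = argClass \/ x = myClass \/ x = state) ->
    wf_ty sigma -> wf_ty tau ->
    ~ In l (lbl_rec R) ->
    typ empty_basis (mixin R)
      (TArrow (TArrow sigma (TRField l tau)) (TArrow sigma (TRField l tau))).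
Proof.
  intros R sigma tau l _ _ Hsigma Htau Hnotin.
  assert (Hclass : wf_ty (TArrow sigma (TRField l tau)))
    by (now apply wf_arrow, wf_ty_field).
  unfold mixin. apply typ_lam; [exact Hclass|].
  apply typ_app with (TArrow TOmega (TArrow sigma (TRField l tau))).
  - apply wf_arrow; [apply wf_omega | exact Hclass].
  - now apply typ_Ycomb.
  - apply typ_lam; [constructor|].
    apply typ_lam; [exact Hsigma|].
    apply typ_ext_fresh_field; [assumption | assumption |].
    apply typ_app with sigma; [assumption | now apply typ_var ..].
Qed.
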